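(* Let $k\ge 2$ and let $T_1,\dots,T_k$ be finite sets. Let $\widetilde H=(\widetilde h_{j,i})_{1\le i,j\le k}$ be a $k\times k$ lower-triangular matrix of nonnegative integers with zero diagonal. Suppose there exists a reference structure $(f_2,\dots,f_k)$ on the chain $T_k\to\cdots\to T_1$ whose linear join matrix equals $\widetilde H$. Then: (L1) $\widetilde h_{j,i}\le \min_{i\le n\le j}|T_n|$ for all $1\le i<j\le k$; (L2) $\widetilde h_{i+1,i}\ge \widetilde h_{i+2,i}\ge\cdots\ge \widetilde h_{k,i}$ for all $1\le i\le k-1$; (L3) $\widetilde h_{j,1}\le \widetilde h_{j,2}\le\cdots\le \widetilde h_{j,j-1}$ for all $2\le j\le k$; (L4) $\widetilde h_{j,i+1}-\widetilde h_{j+1,i+1}\ge \widetilde h_{j,i}-\widetilde h_{j+1,i}$ for all indices with $1\le i<j-1<k-1$ (i.e. $i+1<j<k$).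
   Context: A reference structure on the chain $T_k\to\cdots\to T_1$ is a family of partial functions $f_n:T_n\rightharpoonup T_{n-1}$ for $2\le n\le k$ (each tuple $t\in T_n$ references at most one tuple $f_n(t)\in T_{n-1}$; ''$t$ references $t'$'' means $f_n(t)=t'$). For $1\le i<j\le k$, a tuple $t\in T_i$ is a root of $T_j\to\cdots\to T_i$ if there exist $t_{i+1}\in T_{i+1},\dots,t_j\in T_j$ with $f_n(t_n)=t_{n-1}$ for all $i<n\le j$, where $t_i=t$. Let $S_{j,i}\subseteq T_i$ be the set of such roots and $h_{j,i}=|S_{j,i}|$. The linear join matrix of the reference structure is the $k\times k$ lower-triangular matrix $H$ with entries $h_{j,i}$ for $j>i$ and $0$ on and above the diagonal. *)

From HB Require Import structures.
From mathcomp Require Import all_boot all_order all_algebra.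
Set Implicit Arguments. Unset Strict Implicit. Unset Printing Implicit Defensive.

(* A chain of finite sets T 1, ..., T k (indexed by nat; only 1..k matter).
   A reference structure is given by partial functions
   f n : T (n+1) -> option (T n), i.e. f n is the paper's f_{n+1}:
   T_{n+1} ⇀ T_n ("f n u = Some t" means u references t). *)

(* roots f i d : the roots in T i of the chain T (i+d) -> ... -> T i, i.e.
   t \in roots f i d iff there are t_{i+1},...,t_{i+d} with
   f_n(t_n) = t_{n-1}, t_i = t.  Defined by recursion on d = j - i. *)
Fixpoint roots (T : nat -> finType) (f : forall n, T n.+1 -> option (T n))
  (i d : nat) {struct d} : {set T i} :=
  match d with
  | 0 => setT
  | d'.+1 => [set t : T i | [exists u in roots f i.+1 d', f i u == Some t]]
  end.

Definition hjoin (T : nat -> finType) (f : forall n, T n.+1 -> option (T n))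
  (j i : nat) : nat := #|roots f i (j - i)|.

Definition join_matrix_entry (T : nat -> finType)
  (f : forall n, T n.+1 -> option (T n)) (j i : nat) : nat :=
  if i < j then hjoin f j i else 0.

From Pilot Require Import Defs.
From mathcomp Require Import all_boot all_order all_algebra.
From mathcomp Require Import zify.
(* Otherwise [roots] resolves to [fingraph.roots]. *)
Local Notation roots := Defs.roots.

(* Every entry of the join matrix is the cardinality of a root set, and
   [roots f i (d+1)] is the set of tuples referenced from [roots f (i+1) d].
   Since each tuple references at most one tuple, taking referenced sets does
   not increase cardinality (L1, L3), and root sets shrink as the chain grows
   (L2).  For (L4), with [B = S_{j+1,i+1} \subset A = S_{j,i+1}], the tuples
   referenced from [A] but not from [B] come from [A :\: B], so
   [h_{j,i} - h_{j+1,i} <= |A| - |B|]. *)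

Section Roots.
Variables (T : nat -> finType) (f : forall n, T n.+1 -> option (T n)).

Definition referenced {n} (X : {set T n.+1}) : {set T n} :=
  [set t | [exists u in X, f n u == Some t]].

Lemma card_referenced n (X : {set T n.+1}) : #|referenced X| <= #|X|.
Proof.
rewrite -(card_imset (referenced X) (@Some_inj _)).
apply: leq_trans (leq_imset_card (f n) X); apply: subset_leq_card.
apply/subsetP => o /imsetP [t]; rewrite inE => /existsP [u /andP [Xu /eqP fu]] ->.
by apply/imsetP; exists u.
Qed.

Lemma referencedS n (X Y : {set T n.+1}) :
  X \subset Y -> referenced X \subset referenced Y.
Proof.
move=> sXY; apply/subsetP => t; rewrite !inE => /existsP [u /andP [Xu fu]].
by apply/existsP; exists u; rewrite (subsetP sXY).
Qed.

Lemma referencedU n (X Y : {set T n.+1}) :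
  referenced (X :|: Y) = referenced X :|: referenced Y.
Proof.
apply/setP => t; rewrite !inE; apply/existsP/orP.
  by case=> u /andP []; rewrite inE => /orP [] Xu fu; [left | right];
     apply/existsP; exists u; rewrite Xu.
by case=> /existsP [u /andP [Xu fu]]; exists u; rewrite inE Xu ?orbT.
Qed.

Lemma card_referenced_submod n (A B : {set T n.+1}) : B \subset A ->
  #|referenced A| + #|B| <= #|referenced B| + #|A|.
Proof.
move=> sBA; have defA : A = B :|: A :\: B by rewrite -{1}(setID A B) (setIidPr sBA).
have cardA : #|A| = #|B| + #|A :\: B|.
  by rewrite cardsDS // subnKC ?subset_leq_card.
rewrite cardA addnCA [_ + #|B|]addnC leq_add2l {1}defA referencedU.
by rewrite cardsU (leq_trans (leq_subr _ _)) // leq_add2l card_referenced.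
Qed.

Lemma rootsS i d : roots f i d.+1 = referenced (roots f i.+1 d).
Proof. by []. Qed.

Lemma roots_subset i d : roots f i d.+1 \subset roots f i d.
Proof.
elim: d i => [|d IHd] i; first exact: subsetT.
by rewrite rootsS [roots f i d.+1]rootsS referencedS.
Qed.

Lemma card_rootsS i d : #|roots f i d.+1| <= #|roots f i.+1 d|.
Proof. exact: card_referenced. Qed.

Lemma card_roots_le i d n : i <= n <= i + d -> #|roots f i d| <= #|T n|.
Proof.
elim: d i => [|d IHd] i /andP [le_in le_nid].
  by rewrite (_ : n = i) ?max_card //; lia.
have [<-|ne_in] := eqVneq i n; first exact: max_card.
apply: leq_trans (card_rootsS i d) _; apply: IHd; lia.
Qed.

Lemma card_roots_le_bigmin i j :
  i <= j -> #|roots f i (j - i)| <= \big[minn/#|T i|]_(i <= n < j.+1) #|T n|.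
Proof.
move=> le_ij; rewrite big_nat_cond.
apply: (big_ind (fun m => #|roots f i (j - i)| <= m)).
- by apply: card_roots_le; lia.
- by move=> x y lex ley; rewrite leq_min lex ley.
- by move=> n /andP [/andP [le_in lt_nj] _]; apply: card_roots_le; lia.
Qed.

Lemma card_roots_submod i d :
  #|roots f i d.+1| + #|roots f i.+1 d.+1| <=
  #|roots f i d.+2| + #|roots f i.+1 d|.
Proof. exact/card_referenced_submod/roots_subset. Qed.

End Roots.

Theorem theorem1 (k : nat) (hk : 2 <= k) (T : nat -> finType)
  (Ht : nat -> nat -> nat)
  (Hlow : forall i j, 1 <= i <= k -> 1 <= j <= k -> j <= i -> Ht j i = 0)
  (Hex : exists f : forall n, T n.+1 -> option (T n),
      forall i j, 1 <= i <= k -> 1 <= j <= k ->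
        Ht j i = join_matrix_entry f j i) :
  (* (L1) *)
  (forall i j, 1 <= i -> i < j -> j <= k ->
     Ht j i <= \big[minn/#|T i|]_(i <= n < j.+1) #|T n|) /\
  (* (L2) *)
  (forall i j, 1 <= i -> i < j -> j < k -> Ht j.+1 i <= Ht j i) /\
  (* (L3) *)
  (forall i j, 1 <= i -> i.+1 < j -> j <= k -> Ht j i <= Ht j i.+1) /\
  (* (L4) *)
  (forall i j, 1 <= i -> i.+1 < j -> j < k ->
     ((Ht j i)%:Z - (Ht j.+1 i)%:Z <= (Ht j i.+1)%:Z - (Ht j.+1 i.+1)%:Z)%R).
Proof.
case: Hex => f Hf.
have Ht_roots i j : 1 <= i -> i < j -> j <= k -> Ht j i = #|roots f i (j - i)|.
  by move=> *; rewrite Hf /join_matrix_entry /hjoin; [rewrite ifT|lia|lia].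
split; [|split; [|split]] => i j *.
- by rewrite Ht_roots ?card_roots_le_bigmin //; lia.
- rewrite !Ht_roots; try lia.
  by rewrite subSn ?subset_leq_card ?roots_subset //; lia.
- rewrite !Ht_roots; try lia.
  by rewrite -subnSK ?card_rootsS //; lia.
- have := @card_roots_submod _ f i (j - i.+1).
  rewrite !Ht_roots; try lia.
  have -> : j - i = (j - i.+1).+1 by lia.
  have -> : j.+1 - i = (j - i.+1).+2 by lia.
  have -> : j.+1 - i.+1 = (j - i.+1).+1 by lia.
  lia.
Qed.
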